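(* If every tree is graceful, then every tree is supergraceful.
   Context: A graceful labeling of a graph with $q$ edges is an injective map $\varphi: V \to \{0,\dots,q\}$ whose induced edge labels $|\varphi(u)-\varphi(v)|$, $uv\in E$, are pairwise distinct. For a graph with $p$ nodes and $q$ edges, a total labeling is a map $\varphi: V \to \{1,\dots,p+q\}$ such that the $p$ node labels and the $q$ edge labels $|\varphi(u)-\varphi(v)|$ are all pairwise distinct, together forming exactly $\{1,\dots,p+q\}$; a graph is supergraceful if it admits a total labeling. *)

From mathcomp Require Import all_boot.
Set Implicit Arguments. Unset Strict Implicit. Unset Printing Implicit Defensive.

Definition simple_graph (T : finType) (e : rel T) : Prop :=
  symmetric e /\ irreflexive e.

Definition edges (T : finType) (e : rel T) : {set {set T}} :=
  [set [set p.1; p.2] | p : T * T & e p.1 p.2].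

Definition nnodes (T : finType) : nat := #|T|.
Definition nedges (T : finType) (e : rel T) : nat := #|edges e|.

Definition absd (m n : nat) : nat := maxn m n - minn m n.

Definition is_tree (T : finType) (e : rel T) : Prop :=
  [/\ simple_graph e,
      0 < #|T|,
      (forall x y : T, connect e x y) &
      (forall c : seq T, 3 <= size c -> ~ ucycle e c)].

Definition graceful_labeling (T : finType) (e : rel T) (phi : T -> nat) : Prop :=
  [/\ injective phi,
      (forall v, phi v <= nedges e) &
      (forall u v u' v', e u v -> e u' v' ->
         absd (phi u) (phi v) = absd (phi u') (phi v') ->
         [set u; v] = [set u'; v'])].

Definition graceful (T : finType) (e : rel T) : Prop :=
  exists phi : T -> nat, graceful_labeling e phi.

Definition total_labeling (T : finType) (e : rel T) (phi : T -> nat) : Prop :=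
  let N := nnodes T + nedges e in
  [/\ injective phi,
      (forall u v u' v', e u v -> e u' v' ->
         absd (phi u) (phi v) = absd (phi u') (phi v') ->
         [set u; v] = [set u'; v']),
      (forall w u v, e u v -> phi w <> absd (phi u) (phi v)),
      ((forall v, 1 <= phi v <= N) /\
       (forall u v, e u v -> 1 <= absd (phi u) (phi v) <= N)) &
      (forall k, 1 <= k <= N ->
         (exists w, phi w = k) \/ (exists u v, e u v /\ absd (phi u) (phi v) = k))].

Definition supergraceful (T : finType) (e : rel T) : Prop :=
  exists phi : T -> nat, total_labeling e phi.

(* Relabel a graceful labeling phi of a tree by v |-> 2 phi(v) + 1. A tree has
   q + 1 nodes (sending each edge to its endpoint on the far side from a fixed
   root r is injective and misses r), so the injective graceful phi is onto
   {0..q}, and its q distinct edge labels are exactly {1..q}. After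
   relabelling, the nodes carry the odd numbers 1, 3, ..., 2q + 1 and the edges
   the even numbers 2, 4, ..., 2q: an even edge label never equals an odd node
   label, and together they fill {1..2q + 1} = {1..p + q}. *)
From mathcomp Require Import all_boot.
From mathcomp Require Import zify.

Set Implicit Arguments. Unset Strict Implicit.

Lemma edgesP (T : finType) (e : rel T) (E : {set T}) :
  E \in edges e -> exists u v, e u v /\ E = [set u; v].
Proof. by case/imsetP => [[u v]]; rewrite inE /= => euv ->; exists u, v. Qed.

Lemma absd_double_odd m n : absd m.*2.+1 n.*2.+1 = (absd m n).*2.
Proof. rewrite /absd; lia. Qed.

Lemma uniq_sub_iota_mem (s : seq nat) m n k :
  uniq s -> {subset s <= iota m n} -> n <= size s -> m <= k < m + n -> k \in s.
Proof.
move=> s_uniq s_sub s_size k_range.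
have /(uniq_min_size s_uniq s_sub)[_ s_eq] : size (iota m n) <= size s.
  by rewrite size_iota.
by rewrite s_eq mem_iota.
Qed.

Section TreeEdgeCount.

Variables (T : finType) (e : rel T).
Hypotheses (e_sym : symmetric e) (e_irr : irreflexive e).
Hypothesis e_acyclic : forall c : seq T, 3 <= size c -> ~ ucycle e c.

Definition remove_edge (E : {set T}) : rel T :=
  fun x y => e x y && ([set x; y] != E).

Lemma remove_edge_sym E : symmetric (remove_edge E).
Proof. by move=> x y; rewrite /remove_edge e_sym setUC. Qed.

Lemma path_remove_edge (E : {set T}) v a p :
  v \in E -> v \notin a :: p -> path e a p -> path (remove_edge E) a p.
Proof.
move=> vE; elim: p a => [|b p IHp] a //=.
rewrite !inE !negb_or => /and3P[va vb vp] /andP[eab pab].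
rewrite IHp ?inE ?negb_or ?vb // andbT /remove_edge eab /=.
by apply: contraNneq va => abE; move: vE; rewrite -abE !inE (negbTE vb) orbF.
Qed.

Lemma edge_bridge u v : e u v -> ~~ connect (remove_edge [set u; v]) u v.
Proof.
move=> euv; apply/negP => /connectP[p0 p0_path p0_last].
case: (shortenP p0_path) p0_last => -[|y [|z p]] p_path p_uniq _ p_last.
- by rewrite p_last e_irr in euv.
- by move: p_path; rewrite /= /remove_edge p_last eqxx !andbF.
- apply: (e_acyclic (c := u :: y :: z :: p)) => //; apply/andP; split=> //.
  rewrite /cycle rcons_path (sub_path _ p_path) => [|a b /andP[] //].
  by rewrite -p_last e_sym.
Qed.

Lemma edge_far_endpoint r E :
  E \in edges e -> exists2 v, v \in E & ~~ connect (remove_edge E) v r.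
Proof.
case/edgesP => u [v [euv ->]].
have [u_r|] := boolP (connect (remove_edge [set u; v]) u r); last first.
  by exists u; rewrite ?set21.
have [v_r|] := boolP (connect (remove_edge [set u; v]) v r); last first.
  by exists v; rewrite ?set22.
case/negP: (edge_bridge euv); apply: connect_trans u_r _.
by rewrite (sym_connect_sym (remove_edge_sym _)).
Qed.

Hypothesis e_connected : forall x y, connect e x y.
Variable r : T.

Definition far_endpoint (E : {set T}) : T :=
  odflt r [pick v in E | ~~ connect (remove_edge E) v r].

Lemma far_endpointP E : E \in edges e ->
  far_endpoint E \in E /\ ~~ connect (remove_edge E) (far_endpoint E) r.
Proof.
move=> Ee; rewrite /far_endpoint; case: pickP => [v /andP[] //| no_far].
have [v vE v_far] := edge_far_endpoint r Ee.
by have := no_far v; rewrite vE v_far.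
Qed.

(* Otherwise the path from v to r would avoid E. *)
Lemma far_endpoint_first_edge (E : {set T}) v x p :
  v \in E -> ~~ connect (remove_edge E) v r -> path e v (x :: p) ->
  uniq (v :: x :: p) -> r = last v (x :: p) -> E = [set v; x].
Proof.
move=> vE v_far /= /andP[evx xp_path] /andP[v_notin _] r_last.
apply/eqP; apply: contraNT v_far => E_vx; apply/connectP; exists (x :: p) => //=.
by rewrite /remove_edge evx eq_sym E_vx /= (path_remove_edge vE).
Qed.

Lemma far_endpoint_inj : {in edges e &, injective far_endpoint}.
Proof.
move=> E1 E2 E1e E2e same_far.
have [v1E1 v1_far] := far_endpointP E1e; have [v2E2 v2_far] := far_endpointP E2e.
rewrite same_far in v1E1 v1_far.
case/connectP: (e_connected (far_endpoint E2) r) => p0 p0_path p0_last.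
case: (shortenP p0_path) p0_last => -[|x p] p_path p_uniq _ p_last.
  by rewrite p_last connect0 in v2_far.
have E1_vx := far_endpoint_first_edge v1E1 v1_far p_path p_uniq p_last.
have E2_vx := far_endpoint_first_edge v2E2 v2_far p_path p_uniq p_last.
by rewrite E1_vx -E2_vx.
Qed.

Lemma nedges_lt_card : nedges e < #|T|.
Proof.
rewrite /nedges -(card_in_imset far_endpoint_inj) -cardsT; apply: proper_card.
apply/properP; split; first exact: subsetT.
exists r; rewrite ?inE //; apply/imsetP => -[E Ee r_far].
by have [_] := far_endpointP Ee; rewrite -r_far connect0.
Qed.

End TreeEdgeCount.

Section GracefulLabeling.

Variables (T : finType) (e : rel T) (phi : T -> nat).
Hypothesis e_irr : irreflexive e.
Hypothesis phi_graceful : graceful_labeling e phi.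

Let q := nedges e.

Lemma graceful_card : #|T| <= q.+1.
Proof.
have [phi_inj phi_le _] := phi_graceful.
rewrite cardE -(size_map phi) -(size_iota 0 q.+1).
apply: uniq_leq_size; first by rewrite map_inj_uniq ?enum_uniq.
by move=> _ /mapP[v _ ->]; rewrite mem_iota ltnS phi_le.
Qed.

Lemma graceful_node_label_onto k :
  #|T| = q.+1 -> k <= q -> exists v, phi v = k.
Proof.
have [phi_inj phi_le _] := phi_graceful.
move=> card_T k_le; have : k \in map phi (enum T).
  apply: (uniq_sub_iota_mem (m := 0) (n := q.+1)); rewrite ?add0n ?ltnS //.
  - by rewrite map_inj_uniq ?enum_uniq.
  - by move=> _ /mapP[v _ ->]; rewrite mem_iota ltnS phi_le.
  - by rewrite size_map -cardE card_T.
by case/mapP => v _ ->; exists v.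
Qed.

Lemma graceful_edge_label_range u v : e u v -> 0 < absd (phi u) (phi v) <= q.
Proof.
have [phi_inj phi_le _] := phi_graceful.
move=> euv; have : phi u != phi v.
  by apply: contraTneq euv => /phi_inj ->; rewrite e_irr.
by have := phi_le u; have := phi_le v; rewrite /absd; lia.
Qed.

Definition edge_label (E : {set T}) : nat :=
  if [pick p : T * T | e p.1 p.2 && ([set p.1; p.2] == E)] is Some p
  then absd (phi p.1) (phi p.2) else 0.

Lemma edge_labelP E : E \in edges e ->
  exists u v, [/\ e u v, E = [set u; v] & edge_label E = absd (phi u) (phi v)].
Proof.
case/edgesP => u [v [euv ->]]; rewrite /edge_label; case: pickP => [p|no_ends].
  by case/andP=> ep /eqP <-; exists p.1, p.2.
by have := no_ends (u, v); rewrite /= euv eqxx.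
Qed.

Lemma graceful_edge_label_onto k :
  0 < k <= q -> exists u v, e u v /\ absd (phi u) (phi v) = k.
Proof.
have [_ _ phi_edges] := phi_graceful.
move=> k_range; have : k \in map edge_label (enum (edges e)).
  apply: (uniq_sub_iota_mem (m := 1) (n := q)); rewrite ?add1n //.
  - rewrite map_inj_in_uniq ?enum_uniq // => E1 E2; rewrite !mem_enum.
    move=> /edge_labelP[u1 [v1 [e1 -> ->]]] /edge_labelP[u2 [v2 [e2 -> ->]]].
    exact: phi_edges.
  - move=> l /mapP[E]; rewrite mem_enum => /edge_labelP[u [v [euv _ ->]]] ->.
    by rewrite mem_iota add1n; apply: graceful_edge_label_range.
  - by rewrite size_map -cardE.
case/mapP => E; rewrite mem_enum => /edge_labelP[u [v [euv _ ->]]] ->.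
by exists u, v.
Qed.

Lemma graceful_odd_total_labeling :
  #|T| = q.+1 -> total_labeling e (fun v => (phi v).*2.+1).
Proof.
have [phi_inj phi_le phi_edges] := phi_graceful.
move=> card_T; rewrite /total_labeling /nnodes card_T -/q.
split.
- by move=> x y [/double_inj /phi_inj].
- move=> u v u' v' euv euv'.
  by rewrite !absd_double_odd => /double_inj; apply: phi_edges.
- move=> w u v _; rewrite absd_double_odd => /(congr1 odd).
  by rewrite /= !odd_double.
- split=> [v|u v euv]; first by have := phi_le v; lia.
  by rewrite absd_double_odd; have := graceful_edge_label_range euv; lia.
move=> k k_range.
have k_half := odd_double_half k; case: (odd k) k_half => /= k_half.
  have [|v phi_v] := graceful_node_label_onto card_T (k := k./2); first by lia.
  by left; exists v; rewrite phi_v.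
have [|u [v [euv label_uv]]] := graceful_edge_label_onto (k := k./2); first by lia.
by right; exists u, v; rewrite absd_double_odd label_uv.
Qed.

End GracefulLabeling.

Theorem theorem7p9 :
  (forall (T : finType) (e : rel T), is_tree e -> graceful e) ->
  forall (T : finType) (e : rel T), is_tree e -> supergraceful e.
Proof.
move=> trees_graceful T e e_tree.
have [phi phi_graceful] := trees_graceful T e e_tree.
case: e_tree => [[e_sym e_irr] /card_gt0P[r _] e_connected e_acyclic].
have card_T : #|T| = (nedges e).+1.
  apply/eqP; rewrite eqn_leq (graceful_card phi_graceful).
  exact: nedges_lt_card e_sym e_irr e_acyclic e_connected r.
by exists (fun v => (phi v).*2.+1); apply: graceful_odd_total_labeling.
Qed.
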